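(* There exist a compact metric space $X$ and a flow $\phi$ on $X$ which has the shadowing property, is singular-expansive and singular-equicontinuous, but is not equicontinuous.
   Context: A flow is a continuous $\phi:\mathbb{R}\times X\to X$ with $\phi_0=\mathrm{id}$, $\phi_{t+s}=\phi_t\circ\phi_s$; $\phi_I(x)=\{\phi_t(x):t\in I\}$; $Sing(\phi)$ is the set of fixed points; $dist(z,A)=\inf_{a\in A}d(z,a)$ (with $dist(z,\emptyset)=diam(X)$). Singular-expansive: for every $\epsilon>0$ there is $\delta>0$ such that whenever $x,y\in X$ and an increasing homeomorphism $s:\mathbb{R}\to\mathbb{R}$ satisfy $d(\phi_t(x),\phi_{s(t)}(y))\le\delta\,dist(\phi_t(x),Sing(\phi))$ for all $t$, then $\phi_{s(t_0)}(y)\in\phi_{[t_0-\epsilon,t_0+\epsilon]}(x)$ for some $t_0$. Equicontinuous: for every $\epsilon>0$ there is $\delta>0$ such that $d(x,y)\le\delta$ implies $d(\phi_t(x),\phi_t(y))\le\epsilon$ for all $t\in\mathbb{R}$. Singular-equicontinuous: for every $\epsilon>0$ there is $\delta>0$ such that $d(x,y)\le\delta\,dist(x,Sing(\phi))$ implies $d(\phi_t(x),\phi_t(y))\le\epsilon$ for all $t\in\mathbb{R}$. Shadowing property: for $\delta,T>0$ a $(\delta,T)$-pseudo orbit is a sequence $(x_i,t_i)_{i\in\mathbb{Z}}$ with $x_i\in X$, $t_i\ge T$, $d(\phi_{t_i}(x_i),x_{i+1})\le\delta$. Let $Rep(\epsilon)$ be the set of increasing homeomorphisms $s:\mathbb{R}\to\mathbb{R}$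 with $|\frac{s(t)-s(r)}{t-r}-1|\le\epsilon$ for all $t\ne r$. Set $S(0)=0$, $S(i)=t_0+\dots+t_{i-1}$ for $i>0$, $S(i)=-t_{-1}-\dots-t_{i}$ for $i<0$. The pseudo orbit is $\epsilon$-shadowed if there are $x\in X$ and $s\in Rep(\epsilon)$ with $d(\phi_{s(t)}(x),\phi_{t-S(i)}(x_i))\le\epsilon$ for all $i\in\mathbb{Z}$ and $S(i)\le t<S(i+1)$. $\phi$ has the shadowing property if for every $\epsilon>0$ there is $\delta>0$ such that every $(\delta,1)$-pseudo orbit can be $\epsilon$-shadowed. *)

From Stdlib Require Import Reals Lra ZArith List Classical ClassicalEpsilon.
From Coquelicot Require Import Coquelicot.
Open Scope R_scope.

Section Flows.
Variables (X : Type) (d : X -> X -> R).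

Definition is_metric : Prop :=
  (forall x y, 0 <= d x y) /\ (forall x y, d x y = 0 <-> x = y) /\
  (forall x y, d x y = d y x) /\ (forall x y z, d x z <= d x y + d y z).

Definition mopen (U : X -> Prop) : Prop :=
  forall x, U x -> exists r, 0 < r /\ forall y, d x y < r -> U y.

Definition mcompact : Prop :=
  forall (I : Type) (U : I -> X -> Prop), (forall i, mopen (U i)) ->
    (forall x, exists i, U i x) ->
    exists l : list I, forall x, exists i, In i l /\ U i x.

Definition is_flow (phi : R -> X -> X) : Prop :=
  (forall t x eps, 0 < eps -> exists del, 0 < del /\
     forall s y, Rabs (s - t) < del -> d x y < del -> d (phi s y) (phi t x) < eps) /\
  (forall x, phi 0 x = x) /\
  (forall t s x, phi (t + s) x = phi t (phi s x)).

Definition Sing (phi : R -> X -> X) (x : X) : Prop := forall t, phi t x = x.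

Definition diam : R := real (Lub_Rbar (fun r => exists x y, r = d x y)).

Definition dist (z : X) (A : X -> Prop) : R :=
  if excluded_middle_informative (exists a, A a)
  then real (Glb_Rbar (fun r => exists a, A a /\ r = d z a))
  else diam.

End Flows.
Arguments is_metric {X}. Arguments mcompact {X}. Arguments is_flow {X}.
Arguments Sing {X}. Arguments diam {X}. Arguments dist {X}.

Definition inc_homeo (s : R -> R) : Prop :=
  (forall a b, a < b -> s a < s b) /\ continuity s /\
  exists g : R -> R, (forall t, g (s t) = t) /\ (forall t, s (g t) = t) /\ continuity g.

Definition sing_expansive {X : Type} (d : X -> X -> R) (phi : R -> X -> X) : Prop :=
  forall eps, 0 < eps -> exists del, 0 < del /\
    forall x y (s : R -> R), inc_homeo s ->
      (forall t, d (phi t x) (phi (s t) y) <= del * dist d (phi t x) (Sing phi)) ->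
      exists t0 u, t0 - eps <= u <= t0 + eps /\ phi (s t0) y = phi u x.

Definition equicontinuous {X : Type} (d : X -> X -> R) (phi : R -> X -> X) : Prop :=
  forall eps, 0 < eps -> exists del, 0 < del /\
    forall x y, d x y <= del -> forall t, d (phi t x) (phi t y) <= eps.

Definition sing_equicontinuous {X : Type} (d : X -> X -> R) (phi : R -> X -> X) : Prop :=
  forall eps, 0 < eps -> exists del, 0 < del /\
    forall x y, d x y <= del * dist d x (Sing phi) -> forall t, d (phi t x) (phi t y) <= eps.

Fixpoint sumN (f : nat -> R) (k : nat) : R :=
  match k with O => 0 | S k => sumN f k + f k end.

(* S(0)=0, S(i)=t_0+...+t_{i-1} (i>0), S(i)= -t_{-1}-...-t_i (i<0) *)
Definition Ssum (ts : Z -> R) (i : Z) : R :=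
  if Z.leb 0 i then sumN (fun n => ts (Z.of_nat n)) (Z.to_nat i)
  else - sumN (fun n => ts (i + Z.of_nat n)%Z) (Z.to_nat (- i)).

Definition pseudo_orbit {X : Type} (d : X -> X -> R) (phi : R -> X -> X)
  (del T : R) (xs : Z -> X) (ts : Z -> R) : Prop :=
  forall i, T <= ts i /\ d (phi (ts i) (xs i)) (xs (i + 1)%Z) <= del.

Definition Rep (eps : R) (s : R -> R) : Prop :=
  inc_homeo s /\ forall t r, t <> r -> Rabs ((s t - s r) / (t - r) - 1) <= eps.

Definition shadowed {X : Type} (d : X -> X -> R) (phi : R -> X -> X)
  (eps : R) (xs : Z -> X) (ts : Z -> R) : Prop :=
  exists x s, Rep eps s /\
    forall i t, Ssum ts i <= t < Ssum ts (i + 1) ->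
      d (phi (s t) x) (phi (t - Ssum ts i) (xs i)) <= eps.

Definition shadowing {X : Type} (d : X -> X -> R) (phi : R -> X -> X) : Prop :=
  forall eps, 0 < eps -> exists del, 0 < del /\
    forall xs ts, pseudo_orbit d phi del 1 xs ts -> shadowed d phi eps xs ts.

From Pilot Require Import Defs.
From Stdlib Require Import Reals Lra Lia ZArith List Classical ClassicalEpsilon.
From Coquelicot Require Import Coquelicot.
Open Scope R_scope.

(* The example is [0, 1] with the logistic flow x' = x (1 - x), whose time-t map is
   x e^t / (1 - x + x e^t): 0 is repelling, 1 is attracting, and dist(x, Sing) = min(x, 1 - x).
   Two points at distance at most del * min(x, 1 - x) lie on one orbit, a time O(del) apart,
   which yields singular expansivity and singular equicontinuity; equicontinuity fails because
   points arbitrarily close to 0 still reach 1/2.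
   A (del, 1)-pseudo-orbit either stays below a level b (shadowed by 0), stays above it
   (it is then near 1, shadowed by 1), or crosses it once.  After the crossing it climbs by
   b/16 per step through [b, 1 - b], so it stays there O(1/b) steps, while the true orbit
   through the crossing point follows it with a time lag growing by O(del / b) per step. *)

Definition logistic_den (t x : R) : R := 1 - x + x * exp t.
Definition logistic (t x : R) : R := x * exp t / logistic_den t x.

Lemma exp_ge1 s : 0 <= s -> 1 <= exp s.
Proof. intros. pose proof (exp_ineq1_le s). lra. Qed.

Lemma exp_sub1_le h : 0 <= h <= 1/2 -> exp h - 1 <= 2 * h.
Proof.
  intros Hh. pose proof (exp_ineq1_le (-h)).
  assert (exp h * exp (-h) = 1) by (rewrite <- exp_plus, Rplus_opp_r; apply exp_0).
  pose proof (exp_pos h). nra.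
Qed.

Lemma ln_lipschitz r p q : 0 < r -> r <= p -> r <= q -> Rabs (ln p - ln q) <= Rabs (p - q) / r.
Proof.
  intros Hr Hp Hq.
  assert (Hone : forall a c, r <= a -> r <= c -> ln a - ln c <= Rabs (a - c) / r).
  { intros a c Ha Hc.
    replace (ln a - ln c) with (ln (a / c)) by (rewrite ln_div; lra).
    pose proof (exp_ineq1_le (ln (a / c))) as Hln.
    rewrite exp_ln in Hln by (apply Rdiv_lt_0_compat; lra).
    replace (a / c) with (1 + (a - c) / c) in Hln |- * by (field; lra).
    assert ((a - c) / c <= Rabs (a - c) / r).
    { destruct (Rle_dec 0 (a - c)).
      - rewrite Rabs_pos_eq by lra. apply Rmult_le_compat_l; [lra|].
        apply Rinv_le_contravar; lra.
      - apply Rle_trans with 0.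
        + apply Rmult_le_0_r; [lra|]. left; apply Rinv_0_lt_compat; lra.
        + apply Rmult_le_pos; [apply Rabs_pos|]. left; apply Rinv_0_lt_compat; lra. }
    lra. }
  pose proof (Hone p q Hp Hq) as Hpq. pose proof (Hone q p Hq Hp) as Hqp.
  rewrite Rabs_minus_sym in Hqp. apply Rabs_le. lra.
Qed.

Lemma logistic_den_ge_min t x : 0 <= x <= 1 -> Rmin 1 (exp t) <= logistic_den t x.
Proof.
  intros Hx. unfold logistic_den. pose proof (exp_pos t).
  unfold Rmin; destruct (Rle_dec 1 (exp t)); nra.
Qed.

Lemma logistic_den_gt0 t x : 0 <= x <= 1 -> 0 < logistic_den t x.
Proof.
  intros Hx. pose proof (logistic_den_ge_min t x Hx). pose proof (exp_pos t).
  unfold Rmin in *; destruct (Rle_dec 1 (exp t)); lra.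
Qed.

Lemma logistic_in01 t x : 0 <= x <= 1 -> 0 <= logistic t x <= 1.
Proof.
  intros Hx. pose proof (logistic_den_gt0 t x Hx). pose proof (exp_pos t).
  unfold logistic. split.
  - apply Rdiv_le_0_compat; nra.
  - apply Rmult_le_reg_r with (logistic_den t x); [lra|].
    unfold Rdiv. rewrite Rmult_assoc, Rinv_l by lra. unfold logistic_den. nra.
Qed.

Lemma logistic0 x : logistic 0 x = x.
Proof. unfold logistic, logistic_den. rewrite exp_0. field. lra. Qed.

Lemma logisticD t s x : 0 <= x <= 1 -> logistic (t + s) x = logistic t (logistic s x).
Proof.
  intros Hx. pose proof (logistic_den_gt0 s x Hx). pose proof (logistic_den_gt0 (t + s) x Hx).
  unfold logistic, logistic_den in *. rewrite exp_plus in *. field. split; nra.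
Qed.

Lemma logisticC a c y : 0 <= y <= 1 -> logistic a (logistic c y) = logistic c (logistic a y).
Proof. intros. rewrite <- !logisticD by auto. f_equal; ring. Qed.

Lemma logisticNK h y : 0 <= y <= 1 -> logistic (- h) (logistic h y) = y.
Proof. intros. rewrite <- logisticD, Rplus_opp_l by auto. apply logistic0. Qed.

Lemma logistic_at0 t : logistic t 0 = 0.
Proof. unfold logistic. rewrite Rmult_0_l. apply Rdiv_0_l. Qed.

Lemma logistic_at1 t : logistic t 1 = 1.
Proof. unfold logistic, logistic_den. pose proof (exp_pos t). field. lra. Qed.

Lemma logistic_sub_id h y : 0 <= y <= 1 ->
  logistic h y - y = y * (1 - y) * (exp h - 1) / logistic_den h y.
Proof.
  intros Hy. pose proof (logistic_den_gt0 h y Hy). unfold logistic, logistic_den in *. field. lra.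
Qed.

Lemma logistic_sub t x y : 0 <= x <= 1 -> 0 <= y <= 1 ->
  logistic t y - logistic t x = exp t * (y - x) / (logistic_den t y * logistic_den t x).
Proof.
  intros Hx Hy. pose proof (logistic_den_gt0 t x Hx). pose proof (logistic_den_gt0 t y Hy).
  unfold logistic, logistic_den in *. field. split; lra.
Qed.

Lemma logistic_ge_id s y : 0 <= y <= 1 -> 0 <= s -> y <= logistic s y.
Proof.
  intros Hy Hs. pose proof (logistic_sub_id s y Hy). pose proof (logistic_den_gt0 s y Hy).
  pose proof (exp_ge1 s Hs).
  assert (0 <= y * (1 - y) * (exp s - 1) / logistic_den s y) by (apply Rdiv_le_0_compat; [apply Rmult_le_pos; nra | lra]).
  lra.
Qed.

Lemma logistic_le_time s t y : 0 <= y <= 1 -> s <= t -> logistic s y <= logistic t y.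
Proof.
  intros Hy Hst. replace t with ((t - s) + s) by ring.
  rewrite logisticD by auto. apply logistic_ge_id; [apply logistic_in01; auto | lra].
Qed.

Lemma logistic_near_id_pos h y : 0 <= y <= 1 -> 0 <= h <= 1/2 ->
  0 <= logistic h y - y <= h / 2.
Proof.
  intros Hy Hh. rewrite logistic_sub_id by auto.
  pose proof (exp_ge1 h (proj1 Hh)). pose proof (exp_sub1_le h Hh).
  assert (Hden : 1 <= logistic_den h y) by (unfold logistic_den; nra).
  assert (0 <= y * (1 - y) <= 1/4) by (pose proof (pow2_ge_0 (y - 1/2)); nra).
  split.
  - apply Rdiv_le_0_compat; [apply Rmult_le_pos; nra | lra].
  - apply Rle_trans with (y * (1 - y) * (exp h - 1)); [|nra].
    apply Rmult_le_reg_r with (logistic_den h y); [lra|].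
    unfold Rdiv. rewrite Rmult_assoc, Rinv_l by lra.
    assert (0 <= y * (1 - y) * (exp h - 1)) by (apply Rmult_le_pos; lra).
    nra.
Qed.

Lemma logistic_near_id h y : 0 <= y <= 1 -> Rabs h <= 1/2 ->
  Rabs (logistic h y - y) <= Rabs h / 2.
Proof.
  intros Hy Hh. destruct (Rle_dec 0 h).
  - rewrite (Rabs_pos_eq h) in * by lra.
    pose proof (logistic_near_id_pos h y Hy (conj r Hh)). rewrite Rabs_pos_eq; lra.
  - rewrite (Rabs_left h) in * by lra.
    pose proof (logistic_near_id_pos (- h) (logistic h y) (logistic_in01 h y Hy) ltac:(lra))
      as Hback.
    rewrite logisticNK in Hback by auto. rewrite Rabs_left1; lra.
Qed.

Definition logit x : R := ln x - ln (1 - x).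

Lemma exp_logit x : 0 < x < 1 -> exp (logit x) = x / (1 - x).
Proof.
  intros Hx. unfold logit, Rminus at 1.
  rewrite exp_plus, exp_Ropp, !exp_ln by lra. reflexivity.
Qed.

Lemma logistic_logit p q : 0 < p < 1 -> 0 < q < 1 -> logistic (logit p - logit q) q = p.
Proof.
  intros Hp Hq.
  assert (He : exp (logit p - logit q) = p / (1 - p) / (q / (1 - q))).
  { unfold Rminus at 1. rewrite exp_plus, exp_Ropp, !exp_logit by lra. reflexivity. }
  unfold logistic, logistic_den. rewrite He. field. repeat split; lra.
Qed.

Lemma logistic_connect r p q : 0 < r -> r <= p <= 1 - r -> r <= q <= 1 - r ->
  exists g, logistic g q = p /\ Rabs g <= 2 * Rabs (p - q) / r.
Proof.
  intros Hr Hp Hq. exists (logit p - logit q). split; [apply logistic_logit; lra|].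
  pose proof (ln_lipschitz r p q Hr ltac:(lra) ltac:(lra)) as Hlin.
  pose proof (ln_lipschitz r (1 - q) (1 - p) Hr ltac:(lra) ltac:(lra)) as Hlin'.
  replace (1 - q - (1 - p)) with (p - q) in Hlin' by ring.
  replace (logit p - logit q) with ((ln p - ln q) + (ln (1 - q) - ln (1 - p)))
    by (unfold logit; ring).
  eapply Rle_trans; [apply Rabs_triang | lra].
Qed.

Lemma logistic_push r t x : 0 < r <= 1/2 -> r <= x <= 1 - r -> 1 <= t ->
  x + r / 4 <= logistic t x.
Proof.
  intros Hr Hx Ht. assert (Hx' : 0 <= x <= 1) by lra.
  apply Rle_trans with (logistic 1 x); [|apply logistic_le_time; auto].
  enough (r / 4 <= logistic 1 x - x) by lra.
  rewrite logistic_sub_id by auto.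
  pose proof (exp_ineq1_le 1). pose proof (logistic_den_gt0 1 x Hx').
  assert (logistic_den 1 x <= exp 1) by (unfold logistic_den; nra).
  assert (r / 2 <= x * (1 - x)) by nra.
  apply Rmult_le_reg_r with (logistic_den 1 x); [lra|].
  unfold Rdiv at 2. rewrite Rmult_assoc, Rinv_l by lra. nra.
Qed.

Lemma logistic_connect_rel del a c : 0 < del <= 1/8 -> 0 <= a <= 1 ->
  Rabs (a - c) <= del * Rmin a (1 - a) ->
  exists g, Rabs g <= 4 * del /\ logistic g a = c.
Proof.
  intros Hd Ha Hac. set (m := Rmin a (1 - a)) in *.
  assert (Hm : 0 <= m /\ m <= a /\ m <= 1 - a)
    by (unfold m, Rmin; destruct (Rle_dec a (1 - a)); lra).
  pose proof (proj1 (Rabs_le_between' _ _ _) Hac).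
  destruct (Req_dec m 0) as [Hm0 | Hm0].
  - exists 0. split; [rewrite Rabs_R0; lra|]. rewrite logistic0. nra.
  - assert (del * m <= m / 8) by nra.
    destruct (logistic_connect (m / 2) c a ltac:(lra) ltac:(lra) ltac:(lra)) as (g & Hg & Hgb).
    exists g. split; [|exact Hg].
    eapply Rle_trans; [exact Hgb|]. apply Rle_div_l; [lra|].
    rewrite Rabs_minus_sym. lra.
Qed.

Lemma logistic_lipschitz t x y : 0 <= x <= 1 -> 0 <= y <= 1 ->
  Rabs (logistic t y - logistic t x) <= (exp t + exp (- t)) * Rabs (y - x).
Proof.
  intros Hx Hy.
  pose proof (logistic_den_ge_min t x Hx). pose proof (logistic_den_ge_min t y Hy).
  pose proof (exp_pos t). pose proof (exp_pos (- t)).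
  assert (exp t * exp (- t) = 1) by (rewrite <- exp_plus, Rplus_opp_r; apply exp_0).
  set (K := exp t + exp (- t)). set (m := Rmin 1 (exp t)) in *.
  set (Dx := logistic_den t x) in *. set (Dy := logistic_den t y) in *.
  assert (Hm : 0 < m /\ exp t <= K * (m * m))
    by (unfold K, m, Rmin; destruct (Rle_dec 1 (exp t)); nra).
  assert (HD : 0 < Dy * Dx /\ m * m <= Dy * Dx) by (split; nra).
  assert (Hc : exp t / (Dy * Dx) <= K).
  { apply Rmult_le_reg_r with (Dy * Dx); [lra|].
    unfold Rdiv. rewrite Rmult_assoc, Rinv_l by lra. unfold K in *. nra. }
  rewrite logistic_sub by auto. fold Dx Dy.
  replace (exp t * (y - x) / (Dy * Dx)) with (exp t / (Dy * Dx) * (y - x))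
    by (field; split; lra).
  rewrite Rabs_mult, (Rabs_pos_eq (exp t / (Dy * Dx))) by (apply Rdiv_le_0_compat; lra).
  apply Rmult_le_compat_r; [apply Rabs_pos | exact Hc].
Qed.

Lemma logistic_continuous t x eps : 0 <= x <= 1 -> 0 < eps -> exists del, 0 < del /\
  forall s y, 0 <= y <= 1 -> Rabs (s - t) < del -> Rabs (x - y) < del ->
  Rabs (logistic s y - logistic t x) < eps.
Proof.
  intros Hx He. set (K := exp t + exp (- t)).
  assert (HK : 0 < K) by (unfold K; pose proof (exp_pos t); pose proof (exp_pos (- t)); lra).
  set (del := Rmin (1/2) (eps / (2 * (K + 1)))).
  assert (Hdel : 0 < del <= 1/2 /\ del * (2 * (K + 1)) <= eps).
  { assert (0 < eps / (2 * (K + 1))) by (apply Rdiv_lt_0_compat; lra).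
    assert (eps / (2 * (K + 1)) * (2 * (K + 1)) = eps) by (field; lra).
    unfold del, Rmin; destruct (Rle_dec (1/2) (eps / (2 * (K + 1)))); nra. }
  exists del. split; [lra|]. intros s y Hy Hs Hxy.
  assert (H1 : Rabs (logistic s y - logistic t y) <= Rabs (s - t) / 2).
  { replace s with ((s - t) + t) at 1 by ring. rewrite logisticD by auto.
    apply logistic_near_id; [apply logistic_in01; auto | lra]. }
  pose proof (logistic_lipschitz t x y Hx Hy) as H2. fold K in H2.
  rewrite Rabs_minus_sym in Hxy.
  replace (logistic s y - logistic t x)
    with ((logistic s y - logistic t y) + (logistic t y - logistic t x)) by ring.
  eapply Rle_lt_trans; [apply Rabs_triang|].
  pose proof (Rabs_pos (y - x)). nra.
Qed.

Lemma sumN_shift f k : sumN f (S k) = f 0%nat + sumN (fun n => f (S n)) k.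
Proof. induction k; simpl in *; [ring | rewrite IHk; ring]. Qed.

Lemma sumN_ext f g k : (forall n, f n = g n) -> sumN f k = sumN g k.
Proof. intros Hfg. induction k; simpl; [reflexivity | rewrite IHk, Hfg; reflexivity]. Qed.

Lemma Ssum_succ ts i : Ssum ts (i + 1) = Ssum ts i + ts i.
Proof.
  unfold Ssum. destruct (Z.leb_spec 0 i), (Z.leb_spec 0 (i + 1)); try lia.
  - replace (Z.to_nat (i + 1)) with (S (Z.to_nat i)) by lia. simpl.
    rewrite Z2Nat.id by lia. reflexivity.
  - replace i with (-1)%Z by lia. simpl. ring.
  - replace (Z.to_nat (- i)) with (S (Z.to_nat (- (i + 1)))) by lia.
    rewrite sumN_shift, Z.add_0_r.
    rewrite (sumN_ext (fun n => ts (i + Z.of_nat (S n))%Z) (fun n => ts (i + 1 + Z.of_nat n)%Z))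
      by (intros n; f_equal; lia).
    ring.
Qed.

Lemma Ssum_le ts i j : (forall k, 0 <= ts k) -> (i <= j)%Z -> Ssum ts i <= Ssum ts j.
Proof.
  intros Hts Hij. replace j with (i + Z.of_nat (Z.to_nat (j - i)))%Z by lia.
  induction (Z.to_nat (j - i)) as [|n IH].
  - rewrite Z.add_0_r. lra.
  - replace (i + Z.of_nat (S n))%Z with (i + Z.of_nat n + 1)%Z by lia.
    rewrite Ssum_succ. specialize (Hts (i + Z.of_nat n)%Z). lra.
Qed.

Lemma Z_crossing (P : Z -> Prop) i j : (i <= j)%Z -> ~ P i -> P j ->
  exists m, ~ P m /\ P (m + 1)%Z.
Proof.
  intros Hij. replace j with (i + Z.of_nat (Z.to_nat (j - i)))%Z by lia.
  generalize (Z.to_nat (j - i)). clear Hij. intros n. revert i.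
  induction n as [|n IH]; intros i Hi Hj.
  - rewrite Z.add_0_r in Hj. contradiction.
  - destruct (classic (P (i + 1)%Z)) as [HP1 | HP1]; [now exists i|].
    apply (IH (i + 1)%Z HP1). replace (i + 1 + Z.of_nat n)%Z with (i + Z.of_nat (S n))%Z by lia.
    exact Hj.
Qed.

Section PseudoOrbit.
Variables (b del : R) (p ts : Z -> R).
Hypothesis b_range : 0 < b <= 1/8.
Hypothesis del_range : 0 < del <= b * b * b / 100.
Hypothesis p_in01 : forall i, 0 <= p i <= 1.
Hypothesis ts_ge1 : forall i, 1 <= ts i.
Hypothesis jump_le : forall i, Rabs (logistic (ts i) (p i) - p (i + 1)%Z) <= del.

Lemma del_le_b : del <= b / 64.
Proof. assert (b * b <= 1/64) by nra. nra. Qed.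

Lemma jump_bounds i : p (i + 1)%Z - del <= logistic (ts i) (p i) <= p (i + 1)%Z + del.
Proof. apply Rabs_le_between', jump_le. Qed.

Lemma jump_push i : b / 2 <= p i <= 1 - b / 2 -> p i + b / 8 <= logistic (ts i) (p i).
Proof.
  intros Hi. pose proof (logistic_push (b / 2) (ts i) (p i) ltac:(lra) Hi (ts_ge1 i)). lra.
Qed.

Lemma jump_time i : b <= p (i + 1)%Z <= 1 - b ->
  exists g, logistic g (p (i + 1)%Z) = logistic (ts i) (p i) /\ Rabs g <= 4 / b * del.
Proof.
  intros Hi. pose proof (jump_bounds i). pose proof del_le_b.
  destruct (logistic_connect (b / 2) (logistic (ts i) (p i)) (p (i + 1)%Z)
              ltac:(lra) ltac:(lra) ltac:(lra)) as (g & Hg & Hgb).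
  exists g. split; [exact Hg|]. eapply Rle_trans; [exact Hgb|].
  replace (2 * Rabs (logistic (ts i) (p i) - p (i + 1)%Z) / (b / 2))
    with (4 / b * Rabs (logistic (ts i) (p i) - p (i + 1)%Z)) by (field; lra).
  apply Rmult_le_compat_l; [apply Rlt_le, Rdiv_lt_0_compat; lra | apply jump_le].
Qed.

Lemma above_b_succ i : b <= p i -> b <= p (i + 1)%Z.
Proof.
  intros Hi. pose proof (jump_bounds i). pose proof del_le_b.
  destruct (Rle_dec (p i) (1 - b / 2)).
  - pose proof (jump_push i ltac:(lra)). lra.
  - pose proof (logistic_ge_id (ts i) (p i) (p_in01 i) ltac:(pose proof (ts_ge1 i); lra)). lra.
Qed.

Lemma above_b_le i j : (i <= j)%Z -> b <= p i -> b <= p j.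
Proof.
  intros Hij Hi. replace j with (i + Z.of_nat (Z.to_nat (j - i)))%Z by lia.
  induction (Z.to_nat (j - i)) as [|n IH]; [rewrite Z.add_0_r; exact Hi|].
  replace (i + Z.of_nat (S n))%Z with (i + Z.of_nat n + 1)%Z by lia.
  apply above_b_succ, IH.
Qed.

Section AboveB.
Hypothesis above_b : forall i, b <= p i.

Lemma pred_le_sub j : p j <= 1 - b -> p (j - 1)%Z <= p j - b / 16.
Proof.
  intros Hj. pose proof (jump_bounds (j - 1)%Z) as Hjump.
  replace (j - 1 + 1)%Z with j in Hjump by lia. pose proof del_le_b.
  pose proof (above_b (j - 1)%Z).
  destruct (Rle_dec (p (j - 1)%Z) (1 - b / 2)).
  - pose proof (jump_push (j - 1)%Z ltac:(lra)). lra.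
  - pose proof (logistic_ge_id (ts (j - 1)%Z) (p (j - 1)%Z) (p_in01 _)
                  ltac:(pose proof (ts_ge1 (j - 1)%Z); lra)). lra.
Qed.

(* Below 1 - b the pseudo-orbit, read backwards, drops by b/16 per step, so it would leave [b, 1]. *)
Lemma above_b_near_top i : 1 - b < p i.
Proof.
  destruct (Rlt_dec (1 - b) (p i)) as [|Hi]; [assumption|exfalso].
  assert (Hdrop : forall n, p (i - Z.of_nat n)%Z <= p i - INR n * (b / 16)).
  { induction n as [|n IH]; [rewrite Z.sub_0_r; simpl; lra|].
    replace (i - Z.of_nat (S n))%Z with (i - Z.of_nat n - 1)%Z by lia.
    rewrite S_INR.
    assert (0 <= INR n * (b / 16)) by (apply Rmult_le_pos; [apply pos_INR | lra]).
    pose proof (pred_le_sub (i - Z.of_nat n)%Z ltac:(lra)). lra. }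
  destruct (INR_unbounded (16 / b)) as [n Hn].
  specialize (Hdrop n). pose proof (above_b (i - Z.of_nat n)%Z). pose proof (p_in01 i).
  assert (1 < INR n * (b / 16)).
  { replace 1 with (16 / b * (b / 16)) by (field; lra). apply Rmult_lt_compat_r; lra. }
  lra.
Qed.

End AboveB.

Lemma lag_bound n : b + INR n * (b / 16) <= 1 -> (INR n + 1) * (4 / b) * del <= b.
Proof.
  intros Hn. pose proof (pos_INR n).
  assert (HnB : INR n <= 16 / b).
  { apply Rmult_le_reg_r with (b / 16); [lra|].
    replace (16 / b * (b / 16)) with 1 by (field; lra). lra. }
  apply Rle_trans with ((16 / b + 1) * (4 / b) * (b * b * b / 100)).
  - apply Rmult_le_compat; [| lra | | lra].
    + apply Rmult_le_pos; [lra | apply Rlt_le, Rdiv_lt_0_compat; lra].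
    + apply Rmult_le_compat_r; [apply Rlt_le, Rdiv_lt_0_compat|]; lra.
  - replace ((16 / b + 1) * (4 / b) * (b * b * b / 100)) with (b * ((64 + 4 * b) / 100))
      by (field; lra).
    nra.
Qed.

Section Crossing.
Variable m : Z.
Hypothesis m_below : p m < b.
Hypothesis succ_m_above : b <= p (m + 1)%Z.

Definition orbit_from (i : Z) : R := logistic (Ssum ts i - Ssum ts m) (p m).

Lemma orbit_from_in01 i : 0 <= orbit_from i <= 1.
Proof. apply logistic_in01, p_in01. Qed.

Lemma orbit_from_succ i : orbit_from (i + 1)%Z = logistic (ts i) (orbit_from i).
Proof. unfold orbit_from. rewrite Ssum_succ, <- logisticD by auto. f_equal. ring. Qed.

Lemma orbit_from_self : orbit_from m = p m.
Proof. unfold orbit_from. rewrite Rminus_diag. apply logistic0. Qed.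

(* After the crossing, either the pseudo-orbit is still in [b, 1 - b], where it climbs by
   b/16 per step and the true orbit lags it by a time shift accumulating 4 del / b per step,
   or both have reached a neighbourhood of the attracting fixed point 1. *)
Definition climbing_mid (n : nat) (i : Z) : Prop :=
  b + INR n * (b / 16) <= p i <= 1 - b /\
  exists h, Rabs h <= (INR n + 1) * (4 / b) * del /\ orbit_from i = logistic h (p i).

Definition near_top (i : Z) : Prop := 1 - b - del <= p i /\ 1 - 2 * b - del <= orbit_from i.

Definition climbing (n : nat) (i : Z) : Prop := climbing_mid n i \/ near_top i.

Lemma climbing_first : climbing 0 (m + 1)%Z.
Proof.
  assert (Horb : orbit_from (m + 1)%Z = logistic (ts m) (p m))
    by (rewrite orbit_from_succ, orbit_from_self; reflexivity).
  pose proof (jump_bounds m). pose proof (p_in01 (m + 1)%Z).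
  destruct (Rle_dec (p (m + 1)%Z) (1 - b)).
  - left. split; [simpl; lra|].
    destruct (jump_time m ltac:(lra)) as (g & Hg & Hgb).
    exists g. split; [simpl; lra | rewrite Horb, Hg; reflexivity].
  - right. split; lra.
Qed.

Lemma climbing_mid_succ n i : climbing_mid n i -> climbing (S n) (i + 1)%Z.
Proof.
  intros [Hpi (h & Hh & Hz)]. unfold climbing, climbing_mid. rewrite S_INR.
  pose proof (p_in01 i). pose proof (p_in01 (i + 1)%Z). pose proof (pos_INR n).
  pose proof (jump_bounds i). pose proof del_le_b.
  pose proof (jump_push i ltac:(nra)).
  assert (Hhb : Rabs h <= b) by (pose proof (lag_bound n ltac:(lra)); lra).
  assert (Horb : orbit_from (i + 1)%Z = logistic h (logistic (ts i) (p i)))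
    by (rewrite orbit_from_succ, Hz; apply logisticC; auto).
  destruct (Rle_dec (p (i + 1)%Z) (1 - b)).
  - left. split; [lra|].
    destruct (jump_time i ltac:(nra)) as (g & Hg & Hgb).
    exists (h + g). split.
    + pose proof (Rabs_triang h g). lra.
    + rewrite logisticD, Hg by auto. exact Horb.
  - right. split; [lra|]. rewrite Horb.
    pose proof (logistic_near_id h (logistic (ts i) (p i)) (logistic_in01 _ _ (p_in01 i))
                  ltac:(lra)) as Hnear.
    apply Rabs_le_between in Hnear. lra.
Qed.

Lemma near_top_succ i : near_top i -> near_top (i + 1)%Z.
Proof.
  intros [Hpi Hz]. pose proof (jump_bounds i). pose proof del_le_b.
  pose proof (p_in01 i). pose proof (ts_ge1 i).
  split.
  - destruct (Rle_dec (p i) (1 - b)).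
    + pose proof (jump_push i ltac:(lra)). lra.
    + pose proof (logistic_ge_id (ts i) (p i) (p_in01 i) ltac:(lra)). lra.
  - rewrite orbit_from_succ.
    pose proof (logistic_ge_id (ts i) _ (orbit_from_in01 i) ltac:(lra)). lra.
Qed.

Lemma climbing_all n : climbing n (m + 1 + Z.of_nat n)%Z.
Proof.
  induction n as [|n IH]; [rewrite Z.add_0_r; exact climbing_first|].
  replace (m + 1 + Z.of_nat (S n))%Z with (m + 1 + Z.of_nat n + 1)%Z by lia.
  destruct IH as [Hmid | Htop].
  - exact (climbing_mid_succ _ _ Hmid).
  - right. exact (near_top_succ _ Htop).
Qed.

Lemma orbit_from_shift i tau :
  logistic tau (orbit_from i) = logistic (Ssum ts i + tau - Ssum ts m) (p m).
Proof. unfold orbit_from. rewrite <- logisticD by auto. f_equal. ring. Qed.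

Lemma shadows_before i tau : (i < m)%Z -> 0 <= tau < ts i ->
  Rabs (logistic tau (orbit_from i) - logistic tau (p i)) <= 3 * b.
Proof.
  intros Him Htau. pose proof del_le_b. pose proof (jump_bounds i).
  assert (p (i + 1)%Z < b).
  { apply Rnot_le_lt. intros Hb. apply (Rlt_not_le _ _ m_below).
    exact (above_b_le (i + 1)%Z m ltac:(lia) Hb). }
  assert (Hts0 : forall k, 0 <= ts k) by (intros k; pose proof (ts_ge1 k); lra).
  pose proof (Ssum_le ts (i + 1)%Z m Hts0 ltac:(lia)) as Hsum. rewrite Ssum_succ in Hsum.
  pose proof (logistic_le_time tau (ts i) (p i) (p_in01 i) ltac:(lra)).
  pose proof (logistic_in01 tau (p i) (p_in01 i)).
  pose proof (logistic_in01 tau _ (orbit_from_in01 i)).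
  assert (logistic tau (orbit_from i) <= p m).
  { rewrite orbit_from_shift. rewrite <- (logistic0 (p m)) at 2.
    apply logistic_le_time; [apply p_in01 | lra]. }
  apply Rabs_le. lra.
Qed.

Lemma shadows_after i tau : (m < i)%Z -> 0 <= tau < ts i ->
  Rabs (logistic tau (orbit_from i) - logistic tau (p i)) <= 3 * b.
Proof.
  intros Hmi Htau. pose proof del_le_b. pose proof (p_in01 i) as Hpi01.
  pose proof (climbing_all (Z.to_nat (i - m - 1))) as Hclimb.
  replace (m + 1 + Z.of_nat (Z.to_nat (i - m - 1)))%Z with i in Hclimb by lia.
  destruct Hclimb as [[Hpi (h & Hh & Hz)] | [Hpi Hz]].
  - pose proof (lag_bound _ (Rle_trans _ _ _ (proj1 Hpi) (proj2 Hpi01))).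
    pose proof (logistic_in01 tau (p i) (p_in01 i)).
    rewrite Hz, logisticC by auto.
    pose proof (logistic_near_id h (logistic tau (p i)) ltac:(assumption) ltac:(lra)). lra.
  - pose proof (logistic_ge_id tau (p i) (p_in01 i) ltac:(lra)).
    pose proof (logistic_ge_id tau _ (orbit_from_in01 i) ltac:(lra)).
    pose proof (logistic_in01 tau (p i) (p_in01 i)).
    pose proof (logistic_in01 tau _ (orbit_from_in01 i)).
    apply Rabs_le. lra.
Qed.

Lemma orbit_from_shadows i tau : 0 <= tau < ts i ->
  Rabs (logistic tau (orbit_from i) - logistic tau (p i)) <= 3 * b.
Proof.
  intros Htau. destruct (Z.lt_trichotomy i m) as [Him | [-> | Hmi]].
  - exact (shadows_before i tau Him Htau).
  - rewrite orbit_from_self, Rminus_diag, Rabs_R0. lra.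
  - exact (shadows_after i tau Hmi Htau).
Qed.

End Crossing.

Definition shadows (x0 : R) : Prop := forall i tau, 0 <= tau < ts i ->
  Rabs (logistic (Ssum ts i + tau) x0 - logistic tau (p i)) <= 3 * b.

Lemma shadows_at0 : (forall i, p i < b) -> shadows 0.
Proof.
  intros Hlow i tau Htau. rewrite logistic_at0, Rminus_0_l, Rabs_Ropp.
  pose proof (jump_bounds i). pose proof (Hlow (i + 1)%Z). pose proof del_le_b.
  pose proof (logistic_le_time tau (ts i) (p i) (p_in01 i) ltac:(lra)).
  pose proof (logistic_in01 tau (p i) (p_in01 i)).
  rewrite Rabs_pos_eq; lra.
Qed.

Lemma shadows_at1 : (forall i, b <= p i) -> shadows 1.
Proof.
  intros Hhigh i tau Htau. rewrite logistic_at1.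
  pose proof (above_b_near_top Hhigh i).
  pose proof (logistic_ge_id tau (p i) (p_in01 i) ltac:(lra)).
  pose proof (logistic_in01 tau (p i) (p_in01 i)).
  rewrite Rabs_pos_eq; lra.
Qed.

Lemma shadows_crossing m : p m < b -> b <= p (m + 1)%Z ->
  shadows (logistic (- Ssum ts m) (p m)).
Proof.
  intros Hm Hm1 i tau Htau.
  replace (logistic (Ssum ts i + tau) (logistic (- Ssum ts m) (p m)))
    with (logistic tau (orbit_from m i)).
  - exact (orbit_from_shadows m Hm Hm1 i tau Htau).
  - rewrite orbit_from_shift, <- logisticD by auto. reflexivity.
Qed.

Lemma pseudo_orbit_shadowed : exists x0, 0 <= x0 <= 1 /\ shadows x0.
Proof.
  destruct (classic (forall i, p i < b)) as [Hlow | Hlow].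
  { exists 0. split; [lra | exact (shadows_at0 Hlow)]. }
  destruct (classic (forall i, b <= p i)) as [Hhigh | Hhigh].
  { exists 1. split; [lra | exact (shadows_at1 Hhigh)]. }
  apply not_all_ex_not in Hlow as [j Hj]. apply Rnot_lt_le in Hj.
  apply not_all_ex_not in Hhigh as [i Hi].
  assert (Hij : (i <= j)%Z).
  { destruct (Z_le_gt_dec i j) as [|Hji]; [assumption|].
    exfalso. exact (Hi (above_b_le j i ltac:(lia) Hj)). }
  destruct (Z_crossing (fun k => b <= p k) i j Hij Hi Hj) as (m & Hm & Hm1).
  exists (logistic (- Ssum ts m) (p m)). split.
  - apply logistic_in01, p_in01.
  - exact (shadows_crossing m (Rnot_le_lt _ _ Hm) Hm1).
Qed.

End PseudoOrbit.

Lemma logistic_shadowing eps : 0 < eps -> exists del, 0 < del /\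
  forall p ts : Z -> R, (forall i, 0 <= p i <= 1) -> (forall i, 1 <= ts i) ->
  (forall i, Rabs (logistic (ts i) (p i) - p (i + 1)%Z) <= del) ->
  exists x0, 0 <= x0 <= 1 /\ forall i tau, 0 <= tau < ts i ->
    Rabs (logistic (Ssum ts i + tau) x0 - logistic tau (p i)) <= eps.
Proof.
  intros He. set (b := Rmin (eps / 3) (1/8)).
  assert (Hb : 0 < b <= 1/8 /\ 3 * b <= eps)
    by (unfold b, Rmin; destruct (Rle_dec (eps / 3) (1/8)); lra).
  exists (b * b * b / 100). split; [assert (0 < b * b * b) by (repeat apply Rmult_lt_0_compat; lra); lra|].
  intros p ts Hp Hts Hjump.
  destruct (pseudo_orbit_shadowed b (b * b * b / 100) p ts (proj1 Hb)
              ltac:(split; [assert (0 < b * b * b) by (repeat apply Rmult_lt_0_compat; lra); lra | lra])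
              Hp Hts Hjump) as (x0 & Hx0 & Hsh).
  exists x0. split; [exact Hx0|]. intros i tau Htau. pose proof (Hsh i tau Htau). lra.
Qed.

Definition unit_interval : Type := {x : R | 0 <= x <= 1}.
Definition ui_dist (x y : unit_interval) : R := Rabs (proj1_sig x - proj1_sig y).
Definition ui_flow (t : R) (x : unit_interval) : unit_interval :=
  exist _ (logistic t (proj1_sig x)) (logistic_in01 t _ (proj2_sig x)).
Definition ui0 : unit_interval := exist _ 0 (conj (Rle_refl 0) Rle_0_1).
Definition ui1 : unit_interval := exist _ 1 (conj Rle_0_1 (Rle_refl 1)).

Lemma ui_eq (x y : unit_interval) : proj1_sig x = proj1_sig y -> x = y.
Proof.
  destruct x as [x hx], y as [y hy]; simpl; intros ->.
  f_equal. apply proof_irrelevance.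
Qed.

Lemma ui_metric : is_metric ui_dist.
Proof.
  unfold is_metric, ui_dist. split; [intros; apply Rabs_pos|]. split; [|split].
  - intros x y; split; intros H.
    + apply ui_eq. destruct (Req_dec (proj1_sig x) (proj1_sig y)); auto.
      exfalso. pose proof (Rabs_pos_lt (proj1_sig x - proj1_sig y)). lra.
    + subst. rewrite Rminus_diag, Rabs_R0. reflexivity.
  - intros; apply Rabs_minus_sym.
  - intros x y z. replace (proj1_sig x - proj1_sig z) with
      ((proj1_sig x - proj1_sig y) + (proj1_sig y - proj1_sig z)) by ring.
    apply Rabs_triang.
Qed.

(* Transport the cover to a family of open sets of R and apply Heine-Borel ([compact_P3]). *)
Lemma ui_compact : mcompact ui_dist.
Proof.
  intros Idx U HU Hcov.
  assert (Hidx : forall y : R, exists i : Idx, forall h : 0 <= y <= 1, U i (exist _ y h)).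
  { intros y. destruct (Rle_dec 0 y) as [r0|r0]; [destruct (Rle_dec y 1) as [r1|r1]|].
    - destruct (Hcov (exist _ y (conj r0 r1))) as [i Hi]. exists i. intros h.
      rewrite (proof_irrelevance _ h (conj r0 r1)). exact Hi.
    - destruct (Hcov ui0) as [i _]. exists i. intros h; exfalso; lra.
    - destruct (Hcov ui0) as [i _]. exists i. intros h; exfalso; lra. }
  set (idx := fun y => proj1_sig (constructive_indefinite_description _ (Hidx y))).
  assert (Hin : forall y h, U (idx y) (exist _ y h))
    by (intros y h; unfold idx; destruct (constructive_indefinite_description _ (Hidx y)); auto).
  set (ball := fun y z => exists r, 0 < r /\
         forall w (hw : 0 <= w <= 1), Rabs (z - w) < r -> U (idx y) (exist _ w hw)).
  set (fam := mkfamily (fun _ => True) ball (fun _ _ => I)).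
  assert (Hfam : covering_open_set (fun c => 0 <= c <= 1) fam).
  { split.
    - intros z hz. exists z. simpl.
      destruct (HU (idx z) (exist _ z hz) (Hin z hz)) as (r & Hr & Hball).
      exists r. split; [exact Hr|]. intros w hw Hw. apply Hball. exact Hw.
    - intros y z (r & Hr & Hball).
      exists (mkposreal (r / 2) ltac:(lra)). intros z' Hz'. unfold disc in Hz'. simpl in Hz'.
      exists (r / 2). split; [lra|]. intros w hw Hw. apply Hball.
      replace (z - w) with ((z - z') + (z' - w)) by ring.
      eapply Rle_lt_trans; [apply Rabs_triang|]. rewrite Rabs_minus_sym. lra. }
  destruct (compact_P3 0 1 fam Hfam) as (D & HD & l & Hl).
  exists (map idx l). intros [z hz].
  destruct (HD z hz) as (y & (r & Hr & Hball) & HDy).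
  exists (idx y). split.
  - apply in_map, Hl. split; simpl; auto.
  - apply Hball. rewrite Rminus_diag, Rabs_R0. exact Hr.
Qed.

Lemma ui_is_flow : is_flow ui_dist ui_flow.
Proof.
  split; [|split].
  - intros t x eps He.
    destruct (logistic_continuous t (proj1_sig x) eps (proj2_sig x) He) as (del & Hd & H).
    exists del. split; [exact Hd|]. intros s y Hs Hxy. apply H; [apply (proj2_sig y) | exact Hs | exact Hxy].
  - intros x. apply ui_eq, logistic0.
  - intros t s x. apply ui_eq, logisticD, (proj2_sig x).
Qed.

Lemma dist_le_mem {X : Type} (d : X -> X -> R) (A : X -> Prop) z a :
  (forall x y, 0 <= d x y) -> A a -> Defs.dist d z A <= d z a.
Proof.
  intros Hd Ha. unfold Defs.dist.
  destruct (excluded_middle_informative (exists a, A a)) as [_ | Hn];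
    [| exfalso; apply Hn; exists a; exact Ha].
  destruct (Glb_Rbar_correct (fun r => exists a, A a /\ r = d z a)) as [Hlb Hglb].
  assert (Hle : Rbar_le (Glb_Rbar (fun r => exists a, A a /\ r = d z a)) (d z a))
    by (apply Hlb; exists a; auto).
  assert (Hge : Rbar_le 0 (Glb_Rbar (fun r => exists a, A a /\ r = d z a)))
    by (apply Hglb; intros r (a' & _ & ->); apply Hd).
  destruct (Glb_Rbar (fun r => exists a, A a /\ r = d z a)); simpl in *; tauto.
Qed.

Lemma ui_dist_Sing_le x : Defs.dist ui_dist x (Sing ui_flow) <= Rmin (proj1_sig x) (1 - proj1_sig x).
Proof.
  assert (Hpos : forall x y, 0 <= ui_dist x y) by (intros; apply Rabs_pos).
  pose proof (dist_le_mem ui_dist (Sing ui_flow) x ui0 Hpos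
                (fun t => ui_eq (ui_flow t ui0) ui0 (logistic_at0 t))) as H0.
  pose proof (dist_le_mem ui_dist (Sing ui_flow) x ui1 Hpos
                (fun t => ui_eq (ui_flow t ui1) ui1 (logistic_at1 t))) as H1.
  destruct x as [v hv]. unfold ui_dist in *; simpl in *.
  rewrite Rminus_0_r, Rabs_pos_eq in H0 by lra. rewrite Rabs_left1 in H1 by lra.
  apply Rmin_glb; lra.
Qed.

Lemma ui_rel_close_on_orbit del x y : 0 < del <= 1/8 ->
  ui_dist x y <= del * Defs.dist ui_dist x (Sing ui_flow) ->
  exists g, Rabs g <= 4 * del /\ ui_flow g x = y.
Proof.
  intros Hd Hxy.
  assert (Hrel : ui_dist x y <= del * Rmin (proj1_sig x) (1 - proj1_sig x)).
  { eapply Rle_trans; [exact Hxy|]. apply Rmult_le_compat_l; [lra | apply ui_dist_Sing_le]. }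
  destruct (logistic_connect_rel del (proj1_sig x) (proj1_sig y) Hd (proj2_sig x) Hrel)
    as (g & Hg & Hgx).
  exists g. split; [exact Hg | apply ui_eq, Hgx].
Qed.

Lemma ui_sing_equicontinuous : sing_equicontinuous ui_dist ui_flow.
Proof.
  intros eps He. set (del := Rmin (1/8) (eps / 2)).
  assert (Hd : 0 < del <= 1/8 /\ del <= eps / 2)
    by (unfold del, Rmin; destruct (Rle_dec (1/8) (eps / 2)); lra).
  exists del. split; [lra|]. intros x y Hxy t.
  destruct (ui_rel_close_on_orbit del x y (proj1 Hd) Hxy) as (g & Hg & <-).
  unfold ui_dist, ui_flow; simpl. rewrite logisticC, Rabs_minus_sym by apply (proj2_sig x).
  eapply Rle_trans; [apply logistic_near_id; [apply logistic_in01, (proj2_sig x) | lra] | lra].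
Qed.

Lemma ui_sing_expansive : sing_expansive ui_dist ui_flow.
Proof.
  intros eps He. set (del := Rmin (1/8) (eps / 4)).
  assert (Hd : 0 < del <= 1/8 /\ del <= eps / 4)
    by (unfold del, Rmin; destruct (Rle_dec (1/8) (eps / 4)); lra).
  exists del. split; [lra|]. intros x y s _ Hclose.
  specialize (Hclose 0). rewrite (ui_eq (ui_flow 0 x) x (logistic0 _)) in Hclose.
  destruct (ui_rel_close_on_orbit del _ _ (proj1 Hd) Hclose) as (g & Hg & Hgx).
  exists 0, g. apply Rabs_le_between in Hg. split; [lra | symmetry; exact Hgx].
Qed.

Lemma ui_not_equicontinuous : ~ equicontinuous ui_dist ui_flow.
Proof.
  intros Heq. destruct (Heq (1/4) ltac:(lra)) as (del & Hd & H).
  set (q := Rmin del (1/2)).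
  assert (Hq : 0 < q <= 1/2 /\ q <= del) by (unfold q, Rmin; destruct (Rle_dec del (1/2)); lra).
  set (xq := exist (fun x => 0 <= x <= 1) q ltac:(lra) : unit_interval).
  destruct (logistic_connect q (1/2) q ltac:(lra) ltac:(lra) ltac:(lra)) as (g & Hg & _).
  assert (Hclose : ui_dist xq ui0 <= del)
    by (unfold ui_dist; simpl; rewrite Rminus_0_r, Rabs_pos_eq; lra).
  specialize (H xq ui0 Hclose g). unfold ui_dist in H; simpl in H.
  rewrite Hg, logistic_at0, Rminus_0_r, Rabs_pos_eq in H; lra.
Qed.

Lemma Rep_id eps : 0 <= eps -> Rep eps (fun t => t).
Proof.
  intros He. assert (Hc : continuity (fun t => t)) by (apply derivable_continuous, derivable_id).
  split.
  - split; [tauto|]. split; [exact Hc|]. exists (fun t => t). tauto.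
  - intros t r Htr. replace ((t - r) / (t - r) - 1) with 0 by (field; lra).
    rewrite Rabs_R0. exact He.
Qed.

Lemma ui_shadowing : shadowing ui_dist ui_flow.
Proof.
  intros eps He. destruct (logistic_shadowing eps He) as (del & Hd & Hsh).
  exists del. split; [exact Hd|]. intros xs ts Hpo.
  destruct (Hsh (fun i => proj1_sig (xs i)) ts (fun i => proj2_sig (xs i))
              (fun i => proj1 (Hpo i)) (fun i => proj2 (Hpo i))) as (x0 & Hx0 & Hclose).
  exists (exist _ x0 Hx0), (fun t => t). split; [apply Rep_id; lra|].
  intros i t Ht. rewrite Ssum_succ in Ht. unfold ui_dist, ui_flow; simpl.
  replace t with (Ssum ts i + (t - Ssum ts i)) at 1 by ring.
  apply Hclose. lra.
Qed.

Theorem mainTheorem10 :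
  exists (X : Type) (d : X -> X -> R) (phi : R -> X -> X),
    is_metric d /\ mcompact d /\ is_flow d phi /\
    shadowing d phi /\ sing_expansive d phi /\ sing_equicontinuous d phi /\
    ~ equicontinuous d phi.
Proof.
  exists unit_interval, ui_dist, ui_flow.
  exact (conj ui_metric (conj ui_compact (conj ui_is_flow (conj ui_shadowing
           (conj ui_sing_expansive (conj ui_sing_equicontinuous ui_not_equicontinuous)))))).
Qed.
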